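(* Let $d=2\delta$ be even, $H\ge1$, $T_{\max}\ge2$. Let $\mu\in\mathbb{C}^\delta$ with $|\mu_k|=1$ and $\lambda=(\mu_1,\bar\mu_1,\dots,\mu_\delta,\bar\mu_\delta)\in\mathbb{C}^d$, and $e_t=\lambda^{t-1}$. Let the parameters satisfy, for every $T\in\{2,\dots,T_{\max}\}$, $P_{T-1,T-1}=-1$, $P_{T-1,T}=2$, $P_{T-1,t}=0$ for $t\le T-2$, and $\mathtt{B}^\top\mathtt{A}=\frac12\mathrm{diag}(J,\dots,J)$ (block diagonal with $\delta$ blocks), where $J\in\mathbb{R}^{2\times2}$ has all entries equal to $1$. Then $\mathcal{T}_\theta(e_{1:T})=\lambda^T$ for every $T\in\{2,\dots,T_{\max}\}$; in particular the loss in the orthogonal setting vanishes, and $H=\delta$ heads suffice to achieve this.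
   Context: Model: parameters $\mathtt{A},\mathtt{B}\in\mathbb{R}^{H\times d}$ with rows $a_h,b_h\in\mathbb{R}^d$ and $P\in\mathbb{R}^{T_{\max}\times T_{\max}}$; $\mathcal{T}_\theta(e_{1:T})=\sum_{h=1}^H\sum_{t=1}^T P_{T-1,t}\langle e_t,\mathrm{diag}(a_h)e_{T-1}\rangle_{\mathbb{C}}\mathrm{diag}(b_h)e_t$ with $\langle x,y\rangle_{\mathbb{C}}=\sum_i x_i\bar y_i$. Orthogonal setting loss: $\ell(\theta)=\sum_{T=2}^{T_{\max}}\mathbb{E}\|\mathcal{T}_\theta(e_{1:T})-\lambda^T\|^2$ where $\mu$ has i.i.d. coordinates uniform on the unit circle. Powers are coordinatewise. *)

From HB Require Import structures.
From mathcomp Require Import all_boot all_order all_algebra.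
From mathcomp Require Export complex.
Set Implicit Arguments. Unset Strict Implicit. Unset Printing Implicit Defensive.
Import Order.TTheory GRing.Theory Num.Theory.
Local Open Scope ring_scope.

Section Defs.
Variable R : rcfType.
Local Notation C := R[i].

Lemma half_ord_lt (delta : nat) (i : 'I_(delta.*2)) : (i./2 < delta)%N.
Proof. by rewrite ltn_half_double. Qed.

Definition blk (delta : nat) (i : 'I_(delta.*2)) : 'I_delta :=
  Ordinal (half_ord_lt i).

(* lambda = (mu_1, conj mu_1, ..., mu_delta, conj mu_delta) (0-based coordinates:
   even coordinate 2k -> mu_k, odd coordinate 2k+1 -> conj mu_k) *)
Definition lam (delta : nat) (mu : 'I_delta -> C) (i : 'I_(delta.*2)) : C :=
  if odd i then conjc (mu (blk i)) else mu (blk i).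

Definition tok (delta : nat) (mu : 'I_delta -> C) (t : nat) (i : 'I_(delta.*2)) : C :=
  lam mu i ^+ t.-1.

Definition cdot (d : nat) (x y : 'I_d -> C) : C := \sum_(i < d) x i * conjc (y i).

(* 1-based access P_{i,j} to a T_max x T_max matrix (0 outside the range) *)
Definition Pe (n : nat) (P : 'M[R]_n) (i j : nat) : R :=
  match insub i.-1, insub j.-1 with
  | Some a, Some b => P a b
  | _, _ => 0
  end.

(* T_theta(e_{1:T}) = sum_h sum_{t=1}^T P_{T-1,t} <e_t, diag(a_h) e_{T-1}>_C diag(b_h) e_t,
   a_h, b_h the rows of A, B; returned coordinatewise *)
Definition model (H d n : nat) (A B : 'M[R]_(H, d)) (P : 'M[R]_n)
    (e : nat -> 'I_d -> C) (T : nat) (i : 'I_d) : C :=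
  \sum_(h < H) \sum_(1 <= t < T.+1)
     (Pe P T.-1 t)%:C%C * cdot (e t) (fun j => (A h j)%:C%C * e T.-1 j)
       * ((B h i)%:C%C * e t i).

Definition halfBlockJ (delta : nat) : 'M[R]_(delta.*2) :=
  \matrix_(i, j) (if blk i == blk j then 2^-1 else 0).

End Defs.

(* With P as in the hypotheses only the tokens e_{T-1} and e_T contribute, and since every
   coordinate of lambda has modulus 1, <e_T, diag(a_h) e_{T-1}> = sum_j a_hj lambda_j while
   <e_{T-1}, diag(a_h) e_{T-1}> = sum_j a_hj.  Summing over the heads turns the products
   b_hi a_hj into the entries of B^T A, so coordinate i of the output is
   lambda_i^(T-2) ((mu + conj mu) lambda_i - 1) for the block mu of i.  As lambda_i is mu or
   conj mu, lambda_i (mu + conj mu) = lambda_i^2 + 1, which gives lambda_i^T.  One head per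
   block, a_k = indicator of block k and b_k = a_k / 2, realises B^T A = diag(J, ..., J) / 2. *)
From HB Require Import structures.
From mathcomp Require Import all_boot all_order all_algebra.
From mathcomp Require Import complex.
From mathcomp Require Import zify ring.
Import Order.TTheory GRing.Theory Num.Theory.
Local Open Scope ring_scope.

Section OrthogonalSetting.
Variable R : rcfType.
Local Notation C := R[i].

Lemma conjc_realM (x : R) (y : C) : conjc (x%:C%C * y) = x%:C%C * conjc y.
Proof. by rewrite rmorphM; congr (_ * _); exact: conjc_real. Qed.

Lemma cdot_unit_pow (d : nat) (x : 'I_d -> C) (a : 'I_d -> R) (k n : nat) :
  (forall j, x j * conjc (x j) = 1) ->
  cdot (fun j => x j ^+ (k + n)) (fun j => (a j)%:C%C * x j ^+ n)
  = \sum_j (a j)%:C%C * x j ^+ k.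
Proof.
move=> xJ; apply: eq_bigr => j _.
rewrite conjc_realM rmorphXn exprD.
by rewrite mulrCA -mulrA -exprMn xJ expr1n mulr1.
Qed.

Lemma sum_heads_trmx_mul (H d : nat) (A B : 'M[R]_(H, d)) (i : 'I_d) (f : 'I_d -> C) :
  \sum_(h < H) (B h i)%:C%C * \sum_j (A h j)%:C%C * f j
  = \sum_j ((B^T *m A) i j)%:C%C * f j.
Proof.
rewrite (eq_bigr (fun h => \sum_j (B h i)%:C%C * (A h j)%:C%C * f j)); last first.
  by move=> h _; rewrite mulr_sumr; apply: eq_bigr => j _; rewrite mulrA.
rewrite exchange_big /=; apply: eq_bigr => j _.
rewrite -mulr_suml mxE rmorph_sum; congr (_ * _).
by apply: eq_bigr => h _; rewrite !mxE rmorphM.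
Qed.

Lemma model_collapse (H d n : nat) (A B : 'M[R]_(H, d)) (P : 'M[R]_n)
    (e : nat -> 'I_d -> C) (m : nat) (i : 'I_d) :
  Pe P m.+1 m.+1 = -1 -> Pe P m.+1 m.+2 = 2 ->
  (forall t : nat, (1 <= t <= m)%N -> Pe P m.+1 t = 0) ->
  model A B P e m.+2 i
  = \sum_(h < H) (B h i)%:C%C *
      (2 * cdot (e m.+2) (fun j => (A h j)%:C%C * e m.+1 j) * e m.+2 i
       - cdot (e m.+1) (fun j => (A h j)%:C%C * e m.+1 j) * e m.+1 i).
Proof.
move=> Pdiag Pnext Pzero; apply: eq_bigr => h _ /=.
rewrite big_nat_recr //= big_nat_recr //= Pdiag Pnext.
rewrite [X in X + _ + _]big_nat big1 => [|t /andP[t_ge1 t_le]]; last first.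
  by rewrite Pzero ?rmorph0 ?mul0r //; apply/andP; split; lia.
by rewrite rmorphN rmorph1 (_ : (2 : R)%:C%C = 2) ?rmorph_nat //; ring.
Qed.

Section Blocks.
Variable delta : nat.

Lemma blk_fst_subproof (k : 'I_delta) : (k.*2 < delta.*2)%N.
Proof. by rewrite ltn_double. Qed.

Lemma blk_snd_subproof (k : 'I_delta) : (k.*2.+1 < delta.*2)%N.
Proof. by have := ltn_ord k; rewrite -!muln2; lia. Qed.

Definition blk_fst (k : 'I_delta) : 'I_(delta.*2) := Ordinal (blk_fst_subproof k).
Definition blk_snd (k : 'I_delta) : 'I_(delta.*2) := Ordinal (blk_snd_subproof k).

Lemma blk_fstK k : blk (blk_fst k) = k.
Proof. by apply: val_inj; rewrite /= doubleK. Qed.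

Lemma blk_sndK k : blk (blk_snd k) = k.
Proof. by apply: val_inj; rewrite /= uphalf_double. Qed.

Lemma blk_coord (j : 'I_(delta.*2)) :
  j = if odd j then blk_snd (blk j) else blk_fst (blk j).
Proof.
have := odd_double_half j; case: (odd j) => /= j_eq; apply: val_inj => /=; lia.
Qed.

Lemma sum_blk (k : 'I_delta) (F : 'I_(delta.*2) -> C) :
  \sum_j (if blk j == k then F j else 0) = F (blk_fst k) + F (blk_snd k).
Proof.
have fst_snd : blk_snd k != blk_fst k.
  by apply/eqP => /(congr1 val) /=; rewrite -!muln2; lia.
rewrite (bigD1 (blk_fst k)) //= blk_fstK eqxx (bigD1 (blk_snd k)) //=.
rewrite blk_sndK eqxx big1 ?addr0 // => j /andP[j_snd j_fst].
case: eqP => // jk; move: j_snd j_fst; rewrite [j]blk_coord jk.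
by case: (odd j); rewrite eqxx // andbF.
Qed.

Lemma sum_halfBlockJ (i : 'I_(delta.*2)) (f : 'I_(delta.*2) -> C) :
  \sum_j ((halfBlockJ R delta i j)%:C%C * f j)
  = 2^-1 * (f (blk_fst (blk i)) + f (blk_snd (blk i))).
Proof.
rewrite -sum_blk mulr_sumr; apply: eq_bigr => j _.
rewrite mxE eq_sym.
by case: ifP; rewrite ?fmorphV ?rmorph_nat ?rmorph0 ?mul0r ?mulr0.
Qed.

Definition blockA : 'M[R]_(delta, delta.*2) :=
  \matrix_(k, j) (if blk j == k then 1 else 0).

Definition blockB : 'M[R]_(delta, delta.*2) :=
  \matrix_(k, j) (if blk j == k then 2^-1 else 0).

Lemma trmx_blockB_mul_blockA : blockB^T *m blockA = halfBlockJ R delta.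
Proof.
apply/matrixP => i j; rewrite !mxE (bigD1 (blk i)) //= !mxE eqxx big1 ?addr0.
  by rewrite eq_sym; case: ifP; rewrite ?mulr1 ?mulr0.
by move=> k /negbTE k_i; rewrite !mxE eq_sym k_i mul0r.
Qed.

Variable mu : 'I_delta -> C.
Hypothesis mu_unit : forall k, `|mu k| = 1.

Lemma mu_mulJ k : mu k * conjc (mu k) = 1.
Proof. by rewrite -sqr_normc mu_unit expr1n. Qed.

Lemma lam_mulJ i : lam mu i * conjc (lam mu i) = 1.
Proof.
rewrite /lam; case: ifP => _; last exact: mu_mulJ.
by rewrite conjcK mulrC mu_mulJ.
Qed.

Lemma lam_fst k : lam mu (blk_fst k) = mu k.
Proof. by rewrite /lam /= odd_double blk_fstK. Qed.

Lemma lam_snd k : lam mu (blk_snd k) = conjc (mu k).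
Proof. by rewrite /lam /= odd_double blk_sndK. Qed.

Lemma lam_mul_trace i :
  lam mu i * (mu (blk i) + conjc (mu (blk i))) = lam mu i ^+ 2 + 1.
Proof.
rewrite /lam mulrDr expr2; case: ifP => _; last by rewrite mu_mulJ.
by rewrite mulrC mu_mulJ addrC.
Qed.

Lemma model_tok (H Tmax : nat) (A B : 'M[R]_(H, delta.*2)) (P : 'M[R]_Tmax) :
  (forall T : nat, (2 <= T <= Tmax)%N ->
     [/\ Pe P T.-1 T.-1 = -1, Pe P T.-1 T = 2 &
         forall t : nat, (1 <= t <= T - 2)%N -> Pe P T.-1 t = 0]) ->
  B^T *m A = halfBlockJ R delta ->
  forall T : nat, (2 <= T <= Tmax)%N ->
    forall i, model A B P (tok mu) T i = lam mu i ^+ T.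
Proof.
move=> hP hBA [|[|m]] // hT i; have [Pdiag Pnext Pzero] := hP _ hT.
rewrite model_collapse // => [|t]; last by move=> ?; apply: Pzero; rewrite subn2.
set l := lam mu i.
pose f j := 2 * lam mu j * l ^+ m.+1 - l ^+ m.
transitivity (\sum_(h < _) (B h i)%:C%C * \sum_j (A h j)%:C%C * f j).
  apply: eq_bigr => h _; rewrite /tok /=.
  rewrite -[m.+1]add1n cdot_unit_pow; last exact: lam_mulJ.
  rewrite -[m]add0n cdot_unit_pow; last exact: lam_mulJ.
  rewrite -/l mulr_sumr !mulr_suml -sumrB; congr (_ * _).
  apply: eq_bigr => j _; rewrite /f add0n add1n expr1 expr0 mulr1 exprS.
  by move: (l ^+ m) => lm; ring.
rewrite sum_heads_trmx_mul hBA sum_halfBlockJ /f lam_fst lam_snd.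
have trace := lam_mul_trace i; rewrite -/l in trace.
transitivity (l ^+ m * (l * (mu (blk i) + conjc (mu (blk i)))) - l ^+ m).
  by rewrite exprS; field.
by rewrite trace !exprS; ring.
Qed.

End Blocks.
End OrthogonalSetting.

Theorem lemma4 (R : rcfType) (delta H Tmax : nat)
    (A B : 'M[R]_(H, delta.*2)) (P : 'M[R]_Tmax) (mu : 'I_delta -> R[i]) :
  (1 <= H)%N -> (2 <= Tmax)%N ->
  (forall k, `|mu k| = 1) ->
  (forall T : nat, (2 <= T <= Tmax)%N ->
     [/\ Pe P T.-1 T.-1 = -1, Pe P T.-1 T = 2 &
         forall t : nat, (1 <= t <= T - 2)%N -> Pe P T.-1 t = 0]) ->
  B^T *m A = halfBlockJ R delta ->
  (forall T : nat, (2 <= T <= Tmax)%N ->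
     forall i, model A B P (tok mu) T i = lam mu i ^+ T)
  /\
  (exists A' B' : 'M[R]_(delta, delta.*2),
     B'^T *m A' = halfBlockJ R delta /\
     forall T : nat, (2 <= T <= Tmax)%N ->
       forall i, model A' B' P (tok mu) T i = lam mu i ^+ T).
Proof.
move=> _ _ mu_unit hP hBA; split; first exact: model_tok.
exists (blockA R delta), (blockB R delta).
split; first exact: trmx_blockB_mul_blockA.
by apply: model_tok => //; exact: trmx_blockB_mul_blockA.
Qed.
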